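(* Let $A$ be a Dedekind domain. The following are equivalent: (1) $A$ has torsion divisor class group; (2) every overring of $A$ is a localization of $A$; (3) every overring of $A$ is well-centered on $A$; (4) there is no overring $B$ of $A$ with $B\neq A$, $B=A[b]$ for a single element $b$, and $\mathcal U(B)=\mathcal U(A)$.
   Context: An overring of $A$ is a subring of the field of fractions of $A$ containing $A$. $\mathcal U(R)$ is the unit group of a ring $R$. $B$ is well-centered on $A$ if for each $b\in B$ there is $u\in\mathcal U(B)$ with $ub\in A$. $B$ is a localization of $A$ if $B=S^{-1}A$ for a multiplicatively closed set $S$ of nonzero elements of $A$. *)

(* Rings are modelled as subrings of a fixed field K. *)
From mathcomp Require Import all_boot all_algebra.
Set Implicit Arguments. Unset Strict Implicit. Unset Printing Implicit Defensive.
Import GRing.Theory.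
Local Open Scope ring_scope.

Section Defs.
Variable K : fieldType.

Definition subring (S : K -> Prop) : Prop :=
  [/\ S 0, S 1, (forall x y, S x -> S y -> S (x - y))
    & (forall x y, S x -> S y -> S (x * y))].

Definition is_frac_field (A : K -> Prop) : Prop :=
  forall x, exists a b, [/\ A a, A b, b != 0 & x = a / b].

Definition submod (A I : K -> Prop) : Prop :=
  [/\ I 0, (forall x y, I x -> I y -> I (x + y))
    & (forall a x, A a -> I x -> I (a * x))].

Definition ideal (A I : K -> Prop) : Prop :=
  submod A I /\ (forall x, I x -> A x).

Definition span (A : K -> Prop) (s : seq K) (x : K) : Prop :=
  exists c : 'I_(size s) -> K,
    (forall i, A (c i)) /\ x = \sum_(i < size s) c i * s`_i.

Definition noetherian (A : K -> Prop) : Prop :=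
  forall I, ideal A I ->
    exists s : seq K, (forall y, y \in s -> A y) /\ forall x, I x <-> span A s x.

Definition integrally_closed (A : K -> Prop) : Prop :=
  forall x : K, (exists p : {poly K},
     [/\ p \is monic, (forall i, A p`_i) & root p x]) -> A x.

Definition prime_ideal (A P : K -> Prop) : Prop :=
  [/\ ideal A P, ~ P 1 & forall x y, A x -> A y -> P (x * y) -> P x \/ P y].

Definition maximal_ideal (A P : K -> Prop) : Prop :=
  [/\ ideal A P, ~ P 1 &
     forall J, ideal A J -> (forall x, P x -> J x) ->
       J 1 \/ (forall x, J x <-> P x)].

Definition dim_le1 (A : K -> Prop) : Prop :=
  forall P, prime_ideal A P -> (exists x, P x /\ x != 0) -> maximal_ideal A P.

Definition dedekind (A : K -> Prop) : Prop :=
  [/\ subring A, is_frac_field A, noetherian A, integrally_closed A & dim_le1 A].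

Definition frac_ideal (A I : K -> Prop) : Prop :=
  [/\ submod A I, (exists x, I x /\ x != 0)
    & exists d, [/\ A d, d != 0 & forall x, I x -> A (d * x)]].

Definition idprod (I J : K -> Prop) (x : K) : Prop :=
  exists s : seq (K * K),
    (forall p, p \in s -> I p.1 /\ J p.2) /\ x = \sum_(p <- s) p.1 * p.2.

Fixpoint idpow (A I : K -> Prop) (n : nat) : K -> Prop :=
  match n with
  | 0 => A
  | n'.+1 => idprod (idpow A I n') I
  end.

Definition principal (A I : K -> Prop) : Prop :=
  exists y, forall x, I x <-> exists a, A a /\ x = a * y.

(* the (divisor = ideal) class group of A is torsion *)
Definition torsion_class_group (A : K -> Prop) : Prop :=
  forall I, frac_ideal A I -> exists n, (0 < n)%N /\ principal A (idpow A I n).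

Definition overring (A B : K -> Prop) : Prop :=
  subring B /\ (forall x, A x -> B x).

Definition unit_in (R : K -> Prop) (u : K) : Prop :=
  [/\ R u, u != 0 & R u^-1].

Definition is_localization (A B : K -> Prop) : Prop :=
  exists S : K -> Prop,
    [/\ (forall s, S s -> A s /\ s != 0), S 1,
        (forall s t, S s -> S t -> S (s * t)) &
        forall x, B x <-> exists a s, [/\ A a, S s & x = a / s]].

Definition well_centered (A B : K -> Prop) : Prop :=
  forall b, B b -> exists u, unit_in B u /\ A (u * b).

Definition gen_by (A B : K -> Prop) (b : K) : Prop :=
  forall x, B x <-> exists p : {poly K}, (forall i, A p`_i) /\ x = p.[b].

End Defs.

(* The class group is torsion iff every overring is a localization: for x in an
   overring B, the ideal of denominators of x extends to B, so a generator y of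
   one of its powers is a unit of B with y x in A.  Localizations are
   well-centered, and a well-centered monogenic overring A[b] without new units
   is A, as u b lies in A for some unit u of A.  Conversely, if the class group
   is not torsion, an ideal maximal among the non-torsion ideals is a maximal
   ideal P, and A[y] for any y in P^-1 outside A is a proper monogenic overring
   without new units. *)

From Pilot Require Import Defs.
From mathcomp Require Import all_boot all_algebra perm ring.
From Stdlib Require Import Classical ClassicalEpsilon FunctionalExtensionality PropExtensionality.
From Stdlib Require List.
Set Implicit Arguments. Unset Strict Implicit. Unset Printing Implicit Defensive.
Import GRing.Theory.
Local Open Scope ring_scope.

Local Notation "I `<=` J" := (forall x, I x -> J x) (at level 70, no associativity).

Section IdealProduct.
Variable K : fieldType.
Implicit Types I J L : K -> Prop.

Lemma pred_ext I J : I `<=` J -> J `<=` I -> I = J.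
Proof.
move=> IJ JI; apply: functional_extensionality => x.
by apply: propositional_extensionality; split; [apply: IJ | apply: JI].
Qed.

Lemma idprod_mul I J x y : I x -> J y -> idprod I J (x * y).
Proof.
move=> Ix Jy; exists [:: (x, y)]; split; last by rewrite big_seq1.
by move=> p; rewrite inE => /eqP ->.
Qed.

Lemma idprod0 I J : idprod I J 0.
Proof. by exists [::]; rewrite big_nil. Qed.

Lemma idprodD I J x y : idprod I J x -> idprod I J y -> idprod I J (x + y).
Proof.
move=> [s [hs ->]] [t [ht ->]]; exists (s ++ t); split; last by rewrite big_cat.
by move=> p; rewrite mem_cat => /orP [/hs | /ht].
Qed.

Lemma idprod_ind I J L : L 0 -> (forall x y, L x -> L y -> L (x + y)) ->
  (forall i j, I i -> J j -> L (i * j)) -> idprod I J `<=` L.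
Proof.
move=> L0 LD LM x [s [hs ->]]; elim: s hs => [|p s IHs] hs; first by rewrite big_nil.
rewrite big_cons; apply: LD; last by apply: IHs => q qs; apply: hs; rewrite inE qs orbT.
by case: (hs p); rewrite ?inE ?eqxx //; apply: LM.
Qed.

Lemma idprodS I J I' J' : I `<=` I' -> J `<=` J' -> idprod I J `<=` idprod I' J'.
Proof.
move=> II' JJ'; apply: idprod_ind; [exact: idprod0 | exact: idprodD | ].
by move=> i j /II' Ii /JJ' Jj; apply: idprod_mul.
Qed.

Lemma idprodC I J : idprod I J = idprod J I.
Proof.
have sub I' J' : idprod I' J' `<=` idprod J' I'.
  apply: idprod_ind; [exact: idprod0 | exact: idprodD | ].
  by move=> i j Ii Jj; rewrite mulrC; apply: idprod_mul.
by apply: pred_ext; apply: sub.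
Qed.

Lemma idprodA I J L : idprod I (idprod J L) = idprod (idprod I J) L.
Proof.
apply: pred_ext.
  apply: idprod_ind; [exact: idprod0 | exact: idprodD | ].
  move=> i + Ii; apply: idprod_ind; first by rewrite mulr0; apply: idprod0.
    by move=> x y hx hy; rewrite mulrDr; apply: idprodD.
  by move=> j l Jj Ll; rewrite mulrA; apply: idprod_mul => //; apply: idprod_mul.
apply: idprod_ind; [exact: idprod0 | exact: idprodD | ].
move=> w l + Ll; move: w; apply: idprod_ind; first by rewrite mul0r; apply: idprod0.
  by move=> x y hx hy; rewrite mulrDl; apply: idprodD.
by move=> i j Ii Jj; rewrite -mulrA; apply: idprod_mul => //; apply: idprod_mul.
Qed.

Lemma idprodCA I J L : idprod I (idprod J L) = idprod J (idprod I L).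
Proof. by rewrite !idprodA (idprodC I J). Qed.

End IdealProduct.

Definition nonzero (K : fieldType) (I : K -> Prop) := exists x, I x /\ x != 0.

Lemma nonzero_sub (K : fieldType) (I J : K -> Prop) : nonzero I -> I `<=` J -> nonzero J.
Proof. by move=> [x [Ix x0]] IJ; exists x; split => //; apply: IJ. Qed.

Section Subring.
Variables (K : fieldType) (A : K -> Prop).
Hypothesis sA : subring A.
Implicit Types I J P : K -> Prop.

Lemma subring0 : A 0. Proof. by case: sA. Qed.
Lemma subring1 : A 1. Proof. by case: sA. Qed.
Lemma subringB x y : A x -> A y -> A (x - y). Proof. by case: sA => _ _ + _; apply. Qed.
Lemma subringM x y : A x -> A y -> A (x * y). Proof. by case: sA => _ _ _; apply. Qed.
Lemma subringN x : A x -> A (- x).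
Proof. by move=> Ax; rewrite -sub0r; apply: subringB => //; apply: subring0. Qed.
Lemma subringD x y : A x -> A y -> A (x + y).
Proof. by move=> Ax Ay; rewrite -(opprK y); apply: subringB => //; apply: subringN. Qed.

Lemma subring_sum (T : Type) (r : seq T) (F : T -> K) :
  (forall i, A (F i)) -> A (\sum_(i <- r) F i).
Proof. by move=> AF; apply: (big_ind A) => //; [apply: subring0 | apply: subringD]. Qed.

Lemma submod_ring : submod A A.
Proof. by split; [apply: subring0 | apply: subringD | apply: subringM]. Qed.

Lemma submod_idprodl I J : submod A I -> submod A (idprod I J).
Proof.
case=> _ _ IM; split; [exact: idprod0 | exact: idprodD | ].
move=> a x Aa; move: x; apply: idprod_ind; first by rewrite mulr0; apply: idprod0.
  by move=> x y hx hy; rewrite mulrDr; apply: idprodD.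
by move=> i j Ii Jj; rewrite mulrA; apply: idprod_mul => //; apply: IM.
Qed.

Lemma submod_idprodr I J : submod A J -> submod A (idprod I J).
Proof. by rewrite idprodC; apply: submod_idprodl. Qed.

Lemma idprod1l I : submod A I -> idprod A I = I.
Proof.
case=> I0 ID IM; apply: pred_ext; first by apply: idprod_ind => // a i Aa Ii; apply: IM.
by move=> x Ix; rewrite -(mul1r x); apply: idprod_mul => //; apply: subring1.
Qed.

Lemma idprod1r I : submod A I -> idprod I A = I.
Proof. by rewrite idprodC; apply: idprod1l. Qed.

Lemma ideal_idprod I J : ideal A I -> ideal A J -> ideal A (idprod I J).
Proof.
move=> [sI IA] [_ JA]; split; first exact: submod_idprodl.
apply: idprod_ind; [exact: subring0 | exact: subringD | ].
by move=> i j /IA Ai /JA Aj; apply: subringM.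
Qed.

Lemma ideal1_sub I : ideal A I -> I 1 -> A `<=` I.
Proof. by move=> [[_ _ IM] _] I1 x Ax; rewrite -(mulr1 x); apply: IM. Qed.

Definition prin y : K -> Prop := fun x => exists a, A a /\ x = a * y.

Lemma principalP I : principal A I <-> exists y, I = prin y.
Proof.
split=> [[y Iy] | [y ->]]; last by exists y.
by exists y; apply: pred_ext => x /Iy.
Qed.

Lemma prin_self y : prin y y.
Proof. by exists 1; split; [apply: subring1 | rewrite mul1r]. Qed.

Lemma submod_prin y : submod A (prin y).
Proof.
split; first by exists 0; split; [apply: subring0 | rewrite mul0r].
  move=> _ _ [a [Aa ->]] [b [Ab ->]].
  by exists (a + b); split; [apply: subringD | rewrite mulrDl].
move=> a _ Aa [b [Ab ->]].
by exists (a * b); split; [apply: subringM | rewrite mulrA].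
Qed.

Lemma ideal_prin y : A y -> ideal A (prin y).
Proof.
by move=> Ay; split; [apply: submod_prin | move=> _ [a [Aa ->]]; apply: subringM].
Qed.

Lemma prin1 : prin 1 = A.
Proof.
apply: pred_ext => [_ [a [Aa ->]] | x Ax]; first by rewrite mulr1.
by exists x; rewrite mulr1.
Qed.

Lemma idprod_prin x y : idprod (prin x) (prin y) = prin (x * y).
Proof.
have [P0 PD _] := submod_prin (x * y).
apply: pred_ext; last first.
  by move=> _ [a [Aa ->]]; rewrite mulrA; apply: idprod_mul; [exists a | apply: prin_self].
apply: idprod_ind => // _ _ [a [Aa ->]] [b [Ab ->]].
by exists (a * b); split; [apply: subringM | rewrite mulrACA].
Qed.

Lemma prin_idprodK c I : c != 0 -> submod A I ->
  idprod (prin c^-1) (idprod (prin c) I) = I.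
Proof. by move=> c0 sI; rewrite idprodA idprod_prin mulVf // prin1 idprod1l. Qed.

Definition idinv I : K -> Prop := fun z => forall i, I i -> A (z * i).

Lemma submod_idinv I : submod A (idinv I).
Proof.
split; first by move=> i _; rewrite mul0r; apply: subring0.
  by move=> x y hx hy i Ii; rewrite mulrDl; apply: subringD; [apply: hx | apply: hy].
by move=> a x Aa hx i Ii; rewrite -mulrA; apply: subringM => //; apply: hx.
Qed.

Lemma ring_sub_idinv I : ideal A I -> A `<=` idinv I.
Proof. by move=> [_ IA] a Aa i /IA Ai; apply: subringM. Qed.

Lemma idprod_idinv_sub I J : I `<=` J -> idprod I (idinv J) `<=` A.
Proof.
move=> IJ; apply: idprod_ind; [exact: subring0 | exact: subringD | ].
by move=> i z /IJ Ji Jz; rewrite mulrC; apply: Jz.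
Qed.

Lemma idpowS I n : idpow A I n.+1 = idprod (idpow A I n) I.
Proof. by []. Qed.

Lemma submod_idpow I n : submod A I -> submod A (idpow A I n).
Proof. by case: n => [|n] sI /=; [apply: submod_ring | apply: submod_idprodr]. Qed.

Lemma ideal_idpow I n : ideal A I -> ideal A (idpow A I n).
Proof.
move=> iI; elim: n => [|n IHn]; first by split; [apply: submod_ring | ].
by rewrite idpowS; apply: ideal_idprod.
Qed.

Lemma idpow1 I : submod A I -> idpow A I 1 = I.
Proof. by move=> sI; rewrite idpowS idprod1l. Qed.

Lemma idpowD I m n : submod A I ->
  idpow A I (m + n) = idprod (idpow A I m) (idpow A I n).
Proof.
move=> sI; elim: n => [|n IHn]; first by rewrite addn0 idprod1r //; apply: submod_idpow.
by rewrite addnS !idpowS IHn idprodA.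
Qed.

Lemma idpowM I m n : submod A I -> idpow A I (m * n) = idpow A (idpow A I m) n.
Proof.
move=> sI; elim: n => [|n IHn]; first by rewrite muln0.
by rewrite mulnS idpowD // IHn idpowS idprodC.
Qed.

Lemma idpow_idprod I J n : submod A I -> submod A J ->
  idpow A (idprod I J) n = idprod (idpow A I n) (idpow A J n).
Proof.
move=> sI sJ; elim: n => [|n IHn]; first by rewrite /= idprod1l //; apply: submod_ring.
by rewrite !idpowS IHn -!idprodA (idprodCA (idpow A J n)).
Qed.

Lemma idpow_prin y n : idpow A (prin y) n = prin (y ^+ n).
Proof.
elim: n => [|n IHn]; first by rewrite expr0 prin1.
by rewrite idpowS IHn idprod_prin exprSr.
Qed.

Lemma idpow_exp I n x : I x -> idpow A I n (x ^+ n).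
Proof.
move=> Ix; elim: n => [|n IHn]; first by rewrite expr0; apply: subring1.
by rewrite exprSr; apply: idprod_mul.
Qed.

Lemma idpow_sub I n : ideal A I -> (0 < n)%N -> idpow A I n `<=` I.
Proof.
case: n => [|n] // iI _; rewrite idpowS -{3}(idprod1l (proj1 iI)).
by apply: idprodS => //; case: (ideal_idpow n iI).
Qed.

Definition ideal_adj P x : K -> Prop := fun w => exists p a, [/\ P p, A a & w = p + a * x].

Lemma ideal_adj_ideal P x : ideal A P -> A x -> ideal A (ideal_adj P x).
Proof.
move=> [[P0 PD PM] PA] Ax; split.
  split; first by exists 0, 0; rewrite mul0r addr0; split=> //; apply: subring0.
    move=> _ _ [p [a [Pp Aa ->]]] [q [b [Pq Ab ->]]]; exists (p + q), (a + b).
    by rewrite mulrDl addrACA; split=> //; [apply: PD | apply: subringD].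
  move=> c _ Ac [p [a [Pp Aa ->]]]; exists (c * p), (c * a).
  by rewrite mulrDr mulrA; split=> //; [apply: PM | apply: subringM].
move=> _ [p [a [Pp Aa ->]]].
by apply: subringD; [apply: PA | apply: subringM].
Qed.

Lemma ideal_adj_subl P x : P `<=` ideal_adj P x.
Proof. by move=> p Pp; exists p, 0; rewrite mul0r addr0; split=> //; apply: subring0. Qed.

Lemma ideal_adj_r P x : P 0 -> ideal_adj P x x.
Proof. by move=> P0; exists 0, 1; rewrite mul1r add0r; split=> //; apply: subring1. Qed.

Lemma idprod_ideal_adj_sub P x y : ideal A P -> A x -> A y -> P (x * y) ->
  idprod (ideal_adj P x) (ideal_adj P y) `<=` P.
Proof.
move=> [[P0 PD PM] PA] Ax Ay Pxy; apply: idprod_ind => //.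
move=> _ _ [p [a [Pp Aa ->]]] [q [b [Pq Ab ->]]].
rewrite mulrDl !mulrDr; apply: (PD); apply: (PD).
- by rewrite mulrC; apply: PM => //; apply: PA.
- by rewrite mulrC; apply: PM => //; apply: subringM.
- by apply: PM => //; apply: subringM.
- by rewrite mulrACA; apply: PM => //; apply: subringM.
Qed.

Lemma maximal_prime P : maximal_ideal A P -> prime_ideal A P.
Proof.
move=> [iP P1 maxP]; split=> // x y Ax Ay Pxy.
case: (classic (P x)) => Px; [by left | right].
have [[p [a [Pp Aa e]]] | adjP] := maxP _ (ideal_adj_ideal iP Ax) (@ideal_adj_subl P x).
  have -> : y = p * y + a * (x * y) by rewrite mulrA -mulrDl -e mul1r.
  by case: iP => [[_ PD PM] PA]; apply: PD; rewrite ?(mulrC p); apply: PM.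
by case: Px; apply/adjP; apply: ideal_adj_r; case: iP => [[]].
Qed.

End Subring.

Section Noetherian.
Variables (K : fieldType) (A : K -> Prop).
Hypotheses (sA : subring A) (nA : noetherian A).
Implicit Types I J : K -> Prop.

Lemma span_mem (s : seq K) y : y \in s -> Defs.span A s y.
Proof.
move=> ys; exists (fun j : 'I_(size s) => ((j : nat) == index y s)%:R); split.
  by move=> j; case: eqP => _; [apply: subring1 | apply: subring0].
have ys' : (index y s < size s)%N by rewrite index_mem.
rewrite (bigD1 (Ordinal ys')) //= eqxx mul1r nth_index // big1 ?addr0 // => j.
by rewrite -val_eqE /= => /negbTE ->; rewrite mul0r.
Qed.

Lemma span_sub_ideal I s : ideal A I -> {in s, forall y, I y} -> Defs.span A s `<=` I.
Proof.
move=> [[I0 ID IM] _] sI _ [c [Ac ->]].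
by apply: (big_ind I) => // i _; apply: IM => //; apply: sI; apply: mem_nth.
Qed.

(* The union of a strictly increasing chain of ideals would be an ideal
   that is not finitely generated. *)
Lemma noetherian_maximal (T : (K -> Prop) -> Prop) : (exists I, ideal A I /\ T I) ->
  exists P, [/\ ideal A P, T P &
    forall J, ideal A J -> T J -> P `<=` J -> J `<=` P].
Proof.
move=> [I0 [iI0 TI0]]; apply: NNPP => noMax.
have grow (P : {I | ideal A I /\ T I}) : exists J : {I | ideal A I /\ T I},
    sval P `<=` sval J /\ exists x, sval J x /\ ~ sval P x.
  case: P => P [iP TP]; apply: NNPP => noJ; apply: noMax.
  exists P; split=> // J iJ TJ PJ x Jx; apply: NNPP => Px; apply: noJ.
  by exists (exist _ J (conj iJ TJ)); split=> //; exists x.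
pose f P := sval (constructive_indefinite_description _ (grow P)).
have fP P : sval P `<=` sval (f P) /\ exists x, sval (f P) x /\ ~ sval P x.
  exact: svalP (constructive_indefinite_description _ (grow P)).
pose c n := iter n f (exist _ I0 (conj iI0 TI0)).
have c_mono m n : (m <= n)%N -> sval (c m) `<=` sval (c n).
  move=> /subnK <-; elim: (n - m)%N => [|k IHk] //= x cx.
  by apply: (proj1 (fP _)); apply: IHk.
have c_ideal n : ideal A (sval (c n)) by case: (c n) => ? [].
pose U x := exists n, sval (c n) x.
have iU : ideal A U.
  split; last by move=> x [n cx]; case: (c_ideal n) => _; apply.
  split; first by exists 0%N; case: (c_ideal 0%N) => [[]].
    move=> x y [m cx] [n cy]; exists (maxn m n); case: (c_ideal (maxn m n)) => [[_ ID _] _].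
    by apply: ID; [apply: (c_mono m _ (leq_maxl m n)) | apply: (c_mono n _ (leq_maxr m n))].
  by move=> a x Aa [n cx]; exists n; case: (c_ideal n) => [[_ _ IM] _]; apply: IM.
have [s [_ Us]] := nA iU.
have [N cN] : exists N, {in s, forall y, sval (c N) y}.
  have : {in s, forall y, U y} by move=> y ys; apply/Us; apply: span_mem.
  elim: s {Us} => [|y s IHs] sU; first by exists 0%N.
  have [N cN] := IHs (fun z zs => sU z (@mem_behead _ (y :: s) z zs)).
  have [M cM] := sU y (mem_head _ _).
  exists (maxn N M) => z; rewrite inE => /orP [/eqP -> | zs].
    by apply: c_mono cM; rewrite leq_maxr.
  by apply: c_mono (cN z zs); rewrite leq_maxl.
have [x [cx ncx]] := proj2 (fP (c N)).
by apply: ncx; apply: (span_sub_ideal (c_ideal N) cN); apply/Us; exists N.+1.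
Qed.

End Noetherian.

Section Integrality.
Variables (K : fieldType) (A : K -> Prop).
Hypothesis sA : subring A.

Definition poly_over (p : {poly K}) := forall i, A p`_i.

Lemma poly_overC c : A c -> poly_over c%:P.
Proof. by move=> Ac i; rewrite coefC; case: eqP => _ //; apply: (subring0 sA). Qed.

Lemma poly_over0 : poly_over 0.
Proof. by apply: poly_overC; apply: (subring0 sA). Qed.

Lemma poly_over1 : poly_over 1.
Proof. by apply: poly_overC; apply: (subring1 sA). Qed.

Lemma poly_overX : poly_over 'X.
Proof.
by move=> i; rewrite coefX; case: eqP => _; [apply: (subring1 sA) | apply: (subring0 sA)].
Qed.

Lemma poly_overB p q : poly_over p -> poly_over q -> poly_over (p - q).
Proof. by move=> Ap Aq i; rewrite coefB; apply: (subringB sA). Qed.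

Lemma poly_overD p q : poly_over p -> poly_over q -> poly_over (p + q).
Proof. by move=> Ap Aq i; rewrite coefD; apply: (subringD sA). Qed.

Lemma poly_overN p : poly_over p -> poly_over (- p).
Proof. by move=> Ap i; rewrite coefN; apply: (subringN sA). Qed.

Lemma poly_overM p q : poly_over p -> poly_over q -> poly_over (p * q).
Proof.
by move=> Ap Aq i; rewrite coefM; apply: (subring_sum sA) => j; apply: (subringM sA).
Qed.

Lemma poly_over_horner (B : K -> Prop) p x : subring B -> A `<=` B ->
  poly_over p -> B x -> B p.[x].
Proof.
move=> sB AB Ap Bx; rewrite horner_coef; apply: (subring_sum sB) => i.
apply: (subringM sB); first exact: AB.
elim: (i : nat) => [|k IHk]; first by rewrite expr0; apply: (subring1 sB).
by rewrite exprS; apply: (subringM sB).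
Qed.

Lemma poly_over_char_poly n (M : 'M[K]_n) : (forall i j, A (M i j)) ->
  poly_over (char_poly M).
Proof.
move=> AM; rewrite /char_poly /determinant.
apply: (big_ind poly_over); [exact: poly_over0 | exact: poly_overD | ] => s _.
apply: poly_overM.
  by case: (odd_perm s); [apply: poly_overN |]; apply: poly_over1.
apply: (big_ind poly_over); [exact: poly_over1 | exact: poly_overM | ] => i _.
rewrite !mxE; apply: poly_overB; last exact: poly_overC.
by case: (i == s i); [rewrite mulr1n; apply: poly_overX | rewrite mulr0n; apply: poly_over0].
Qed.

(* The determinant trick: z is a root of the characteristic polynomial of
   the matrix of multiplication by z on a generating family of I. *)
Lemma integrally_closed_stable I (s : seq K) z : integrally_closed A ->
  (forall x, I x <-> Defs.span A s x) -> nonzero I -> I `<=` (fun x => I (z * x)) ->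
  A z.
Proof.
move=> icA Is [x0 [Ix0 x00]] zI.
pose n := size s.
have z_span (i : 'I_n) : exists c : 'I_n -> K,
    (forall j, A (c j)) /\ z * s`_i = \sum_(j < n) c j * s`_j.
  by apply/Is; apply: zI; apply/Is; apply: span_mem => //; apply: mem_nth.
have [m mP] := fin_all_exists z_span.
pose M : 'M[K]_n := \matrix_(i, j) m i j.
pose v : 'cV[K]_n := \col_i s`_i.
pose N := z%:M - M.
have Nv : N *m v = 0.
  apply/matrixP => i k; rewrite mulmxBl mul_scalar_mx !mxE (proj2 (mP i)).
  by apply/eqP; rewrite subr_eq0; apply/eqP; apply: eq_bigr => j _; rewrite !mxE.
have v0 : v != 0.
  apply/eqP => v0; move: Ix0 => /Is [c [_ x0E]]; move/eqP: x00; apply.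
  rewrite x0E big1 // => i _.
  by have := congr1 (fun w : 'cV[K]_n => w i ord0) v0; rewrite !mxE => ->; rewrite mulr0.
have detN : \det N = 0.
  have : \det N *: v = 0 by rewrite -mul_scalar_mx -mul_adj_mx -mulmxA Nv mulmx0.
  by move/eqP; rewrite scaler_eq0 (negbTE v0) orbF => /eqP.
apply: icA; exists (char_poly M); split.
- exact: char_poly_monic.
- by apply: poly_over_char_poly => i j; rewrite mxE; case: (mP i).
- apply/eqP; rewrite -horner_evalE /char_poly -det_map_mx -detN; congr (\det _).
  apply/matrixP => i j; rewrite !mxE /N.
  by rewrite rmorphB rmorphMn /= !horner_evalE hornerX hornerC.
Qed.

End Integrality.

Section PrimeProducts.
Variables (K : fieldType) (A : K -> Prop).
Hypotheses (sA : subring A) (nA : noetherian A).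
Implicit Types I J P Q : K -> Prop.

Definition bigprod (ps : seq (K -> Prop)) : K -> Prop := foldr (@idprod K) A ps.

Definition nonzero_primes (ps : seq (K -> Prop)) :=
  forall Q, List.In Q ps -> prime_ideal A Q /\ nonzero Q.

Lemma submod_bigprod ps : submod A (bigprod ps).
Proof.
by elim: ps => [|P ps IHps] /=; [apply: (submod_ring sA) | apply: submod_idprodr].
Qed.

Lemma ideal_bigprod ps : (forall Q, List.In Q ps -> ideal A Q) -> ideal A (bigprod ps).
Proof.
elim: ps => [|Q ps IHps] ips /=; first by split; [apply: (submod_ring sA) |].
by apply: (ideal_idprod sA); [apply: ips; left | apply: IHps => R R_ps; apply: ips; right].
Qed.

Lemma bigprod_cat ps qs : bigprod (ps ++ qs) = idprod (bigprod ps) (bigprod qs).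
Proof.
elim: ps => [|P ps IHps] /=; first by rewrite (idprod1l sA) //; apply: submod_bigprod.
by rewrite IHps idprodA.
Qed.

Lemma bigprod_rem Q ps : List.In Q ps -> exists qs,
  [/\ bigprod ps = idprod Q (bigprod qs), (forall R, List.In R qs -> List.In R ps)
    & size qs = (size ps).-1].
Proof.
elim: ps => [|P ps IHps] //= [-> | Q_ps]; first by exists ps; split=> // R; right.
have [qs [-> qs_ps size_qs]] := IHps Q_ps; exists (P :: qs); split.
- by rewrite /= idprodCA.
- by move=> R /= [-> | R_qs]; [left | right; apply: qs_ps].
- by rewrite /= size_qs; case: ps Q_ps {IHps qs_ps size_qs}.
Qed.

Lemma prime_sub_bigprod P ps : prime_ideal A P -> (forall Q, List.In Q ps -> ideal A Q) ->
  bigprod ps `<=` P -> exists Q, List.In Q ps /\ Q `<=` P.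
Proof.
move=> [iP P1 pP]; elim: ps => [|Q ps IHps] ips psP /=.
  by case: P1; apply: psP; apply: (subring1 sA).
case: (classic (Q `<=` P)) => QP; first by exists Q; split=> //; left.
have [q [Qq Pq]] : exists q, Q q /\ ~ P q.
  by apply: NNPP => noq; apply: QP => x Qx; apply: NNPP => Px; apply: noq; exists x.
have [R [R_ps RP]] : exists R, List.In R ps /\ R `<=` P.
  apply: IHps => [R R_ps | w ps_w]; first by apply: ips; right.
  have Aq : A q by case: (ips Q (or_introl erefl)) => _; apply.
  have Aw : A w.
    by case: (ideal_bigprod (fun R R_ps => ips R (or_intror R_ps))) => _; apply.
  by case: (pP q w Aq Aw (psP _ (idprod_mul Qq ps_w))).
by exists R; split=> //; right.
Qed.

(* If the statement failed, a maximal counterexample P could not be prime, and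
   for x y outside P with xy in P the ideals P + Ax, P + Ay would contain prime products. *)
Lemma bigprod_sub_ideal I : ideal A I -> nonzero I ->
  exists ps, nonzero_primes ps /\ bigprod ps `<=` I.
Proof.
move=> iI nzI; apply: NNPP => noI.
pose T J := nonzero J /\ ~ exists ps, nonzero_primes ps /\ bigprod ps `<=` J.
have [P [iP [nzP noP] maxP]] := noetherian_maximal sA nA (T := T)
  (ex_intro _ I (conj iI (conj nzI noI))).
case: (classic (P 1)) => P1.
  by apply: noP; exists [::]; split=> //; apply: ideal1_sub.
case: (classic (prime_ideal A P)) => pP.
  apply: noP; exists [:: P]; split; first by move=> Q [<- |].
  by rewrite /= (idprod1r sA) //; case: iP.
have [x [y [Ax Ay Pxy Px Py]]] : exists x y, [/\ A x, A y, P (x * y), ~ P x & ~ P y].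
  apply: NNPP => noxy; apply: pP; split=> // x y Ax Ay Pxy.
  case: (classic (P x)) => ?; [by left | ]; case: (classic (P y)) => ?; [by right | ].
  by case: noxy; exists x, y.
have adj_ok z : A z -> ~ P z ->
    exists ps, nonzero_primes ps /\ bigprod ps `<=` ideal_adj A P z.
  move=> Az Pz; apply: NNPP => noz; apply: Pz.
  have Tz : T (ideal_adj A P z).
    by split=> //; apply: nonzero_sub nzP (@ideal_adj_subl _ _ sA P z).
  apply: (maxP _ (ideal_adj_ideal sA iP Az) Tz (@ideal_adj_subl _ _ sA P z)).
  by apply: (ideal_adj_r sA); case: iP => [[]].
have [ps [nps psP]] := adj_ok x Ax Px.
have [qs [nqs qsP]] := adj_ok y Ay Py.
apply: noP; exists (ps ++ qs); split.
  by move=> Q Q_psqs; case: (List.in_app_or _ _ _ Q_psqs) => [/nps | /nqs].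
rewrite bigprod_cat => w /(idprodS psP qsP).
exact: (idprod_ideal_adj_sub sA).
Qed.

End PrimeProducts.

Section Invertibility.
Variables (K : fieldType) (A : K -> Prop).
Hypothesis dA : dedekind A.
Implicit Types I J L M P Q : K -> Prop.

Let sA : subring A. Proof. by case: dA. Qed.
Let nA : noetherian A. Proof. by case: dA. Qed.

(* Take a nonzero a in P and a shortest prime product inside aA; P contains one
   of its factors, which must be P, and an element b of the remaining factors
   outside aA gives b / a. *)
Lemma maximal_idinv_outside P : maximal_ideal A P -> nonzero P ->
  exists z, idinv A P z /\ ~ A z.
Proof.
move=> mP [a [Pa a0]]; have [iP P1 _] := mP; have pP := maximal_prime sA mP.
have Aa : A a by case: iP => _; apply.
have [ps [nps psa]] := bigprod_sub_ideal sA nA (ideal_prin sA Aa)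
  (ex_intro _ a (conj (prin_self sA a) a0)).
move: {2}(size ps) (erefl (size ps)) => n.
elim: n ps nps psa => [|n IHn] ps nps psa size_ps.
  case: ps size_ps {nps} psa => // _ /(_ 1 (subring1 sA)) [c [Ac c1]].
  by case: P1; rewrite c1; case: iP => [[_ _ PM] _]; apply: PM.
have psP : bigprod A ps `<=` P.
  by move=> x /psa [c [Ac ->]]; case: iP => [[_ _ PM] _]; apply: PM.
have ips Q : List.In Q ps -> ideal A Q by move=> /nps [[]].
have [Q [Q_ps QP]] := prime_sub_bigprod sA pP ips psP.
have QE : Q = P.
  have [_ _ maxQ] : maximal_ideal A Q.
    by case: dA => _ _ _ _; apply; case: (nps Q Q_ps).
  by case: (maxQ P iP QP) => [/P1 | PQ] //; apply: pred_ext => // x /PQ.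
have [qs [psE qs_ps size_qs]] := bigprod_rem A Q_ps.
case: (classic (bigprod A qs `<=` prin A a)) => qsa.
  by apply: (IHn qs) => // [R /qs_ps /nps | ]; last by rewrite size_qs size_ps.
have [b [qs_b ab]] : exists b, bigprod A qs b /\ ~ prin A a b.
  by apply: NNPP => nob; apply: qsa => x qs_x; apply: NNPP => ax; apply: nob; exists x.
exists (b / a); split.
  move=> p Pp; have : bigprod A ps (p * b) by rewrite psE QE; apply: idprod_mul.
  by move=> /psa [c [Ac cE]]; rewrite mulrAC (mulrC b) cE mulfK.
by move=> Aba; apply: ab; exists (b / a); split=> //; rewrite divfK.
Qed.

Lemma maximal_above I : ideal A I -> ~ I 1 -> exists M, maximal_ideal A M /\ I `<=` M.
Proof.
move=> iI I1.
pose T J := I `<=` J /\ ~ J 1.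
have [M [iM [IM M1] maxM]] := noetherian_maximal sA nA (T := T)
  (ex_intro _ I (conj iI (conj (fun x h => h) I1))).
exists M; split=> //; split=> // J iJ MJ.
case: (classic (J 1)) => J1; [by left | right] => x; split; last exact: MJ.
by apply: maxM => //; split=> // y /IM /MJ.
Qed.

(* A maximal ideal P with P P^-1 = P would be stable under some z outside A,
   contradicting integral closedness; so P P^-1 = A for maximal P, and a maximal
   counterexample P <= M would give a larger counterexample P M^-1. *)
Lemma idprod_idinv1 I : ideal A I -> nonzero I -> idprod I (idinv A I) 1.
Proof.
move=> iI nzI; apply: NNPP => noI.
pose T J := nonzero J /\ ~ idprod J (idinv A J) 1.
have [P [iP [nzP noP] maxP]] := noetherian_maximal sA nA (T := T)
  (ex_intro _ I (conj iI (conj nzI noI))).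
case: (classic (P 1)) => P1.
  apply: noP; rewrite -(mulr1 1); apply: idprod_mul => //.
  by apply: ring_sub_idinv => //; apply: (subring1 sA).
have [M [mM PM]] := maximal_above iP P1.
have [z [Mz Az]] := maximal_idinv_outside mM (nonzero_sub nzP PM).
pose L := idprod P (idinv A M).
have PL : P `<=` L.
  move=> x Px; rewrite -(mulr1 x); apply: idprod_mul => //.
  by apply: ring_sub_idinv => //; [case: mM | apply: (subring1 sA)].
have iL : ideal A L.
  by split; [apply: submod_idprodl; case: iP | apply: idprod_idinv_sub].
case: (classic (L `<=` P)) => LP.
  apply: Az; have [s [_ Ps]] := nA iP.
  apply: (integrally_closed_stable sA _ Ps nzP); first by case: dA.
  by move=> x Px; apply: LP; rewrite mulrC; apply: idprod_mul.
have L1 : idprod L (idinv A L) 1.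
  apply: NNPP => L1; apply: LP => x; apply: (maxP L iL) => //.
  by split=> //; apply: nonzero_sub nzP PL.
apply: noP; move: L1; rewrite /L -idprodA; apply: idprodS => // w.
have [I0 ID _] := submod_idinv sA P.
apply: idprod_ind => // u v Mu Lv i Pi.
by rewrite [u * v]mulrC -mulrA (mulrC u); apply: Lv; apply: idprod_mul.
Qed.

Lemma idprod_idinv I : ideal A I -> nonzero I -> idprod I (idinv A I) = A.
Proof.
move=> iI nzI; apply: pred_ext; first exact: idprod_idinv_sub.
have [_ _ SM] := submod_idprodl (idinv A I) (proj1 iI).
by move=> x Ax; rewrite -(mulr1 x); apply: SM => //; apply: idprod_idinv1.
Qed.

End Invertibility.

Section Overrings.
Variables (K : fieldType) (A : K -> Prop).
Hypothesis sA : subring A.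
Implicit Types I B : K -> Prop.

Lemma localization_well_centered B : is_localization A B -> well_centered A B.
Proof.
move=> [S [SA S1 SM BE]] _ /BE [a [s [Aa Ss ->]]].
have [As s0] := SA s Ss.
exists s; split; last by rewrite mulrC divfK.
split=> //; apply/BE; first by exists s, 1; rewrite divr1.
by exists 1, s; rewrite div1r; split=> //; apply: subring1.
Qed.

Lemma monogenic_well_centered_sub B b : overring A B -> gen_by A B b ->
  (forall u, unit_in B u <-> unit_in A u) -> well_centered A B -> B `<=` A.
Proof.
move=> [sB AB] genB UBA wcB _ /genB [p [Ap ->]].
apply: (poly_over_horner (A := A) sA) => //.
have Bb : B b by apply/genB; exists 'X; split; [apply: poly_overX | rewrite hornerX].
have [u [/UBA [Au u0 Au'] Aub]] := wcB b Bb.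
by rewrite -(mulKf u0 b); apply: subringM.
Qed.

Definition denominators (x : K) : K -> Prop := fun c => A c /\ A (c * x).

Lemma ideal_denominators x : ideal A (denominators x).
Proof.
split; last by move=> c [].
split; first by rewrite /denominators mul0r; split; apply: subring0.
  move=> c d [Ac Acx] [Ad Adx]; split; first exact: subringD.
  by rewrite mulrDl; apply: subringD.
by move=> c d Ac [Ad Adx]; split; [apply: subringM | rewrite -mulrA; apply: subringM].
Qed.

Lemma overring_prin_inv B y : overring A B -> idprod (prin A y) B 1 -> B y^-1.
Proof.
move=> [sB AB]; have yB : idprod (prin A y) B `<=` (fun w => exists2 c, B c & w = y * c).
  apply: idprod_ind.
  - by exists 0; [apply: subring0 | rewrite mulr0].
  - by move=> _ _ [c Bc ->] [d Bd ->]; exists (c + d); [apply: subringD | rewrite mulrDr].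
  - move=> _ j [c [Ac ->]] Bj; exists (c * j); last by rewrite mulrCA mulrA.
    by apply: (subringM sB) => //; apply: AB.
move=> /yB [c Bc c1]; have y0 : y != 0.
  by apply/eqP => y0; move/eqP: c1; rewrite y0 mul0r oner_eq0.
by rewrite -[y^-1]mulr1 c1 mulKf.
Qed.

Lemma idpow_generate I B n : overring A B -> idprod I B 1 -> idprod (idpow A I n) B 1.
Proof.
move=> [sB AB] IB1; elim: n => [|n IHn].
  by rewrite -(mulr1 1); apply: idprod_mul; [apply: subring1 | apply: (subring1 sB)].
have BB : idprod B B `<=` B.
  by apply: idprod_ind; [apply: (subring0 sB) | apply: (subringD sB) | apply: (subringM sB)].
rewrite -(mulr1 1) idpowS; move: (idprod_mul IHn IB1).
by rewrite -idprodA (idprodCA B) idprodA; apply: idprodS.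
Qed.

End Overrings.

Section Localization.
Variables (K : fieldType) (A : K -> Prop).
Hypothesis dA : dedekind A.
Implicit Types I B : K -> Prop.

Let sA : subring A. Proof. by case: dA. Qed.

(* Write x = a / b; the invertible ideal bA + aA gives 1 = sum (d b + c a) w
   with w in its inverse, and each term is (b w) (d + c x) with b w a denominator of x. *)
Lemma denominators_generate B x : overring A B -> B x ->
  idprod (denominators A x) B 1.
Proof.
move=> [sB AB] Bx; have [a [b [Aa Ab b0 xE]]] : exists a b, [/\ A a, A b, b != 0 & x = a / b].
  by case: dA => _ fA _ _ _; apply: fA.
have aE : a = b * x by rewrite xE mulrC divfK.
pose J := ideal_adj A (prin A b) a.
have iJ : ideal A J by apply: (ideal_adj_ideal sA) => //; apply: (ideal_prin sA).
have Jb : J b by apply: (ideal_adj_subl sA); apply: (prin_self sA).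
have Ja : J a by apply: (ideal_adj_r sA); case: (submod_prin sA b).
move: (idprod_idinv1 dA iJ (ex_intro _ b (conj Jb b0))).
apply: idprod_ind; [exact: idprod0 | exact: idprodD | ].
move=> _ w [_ [c [[d [Ad ->]] Ac ->]]] Jw.
have -> : (d * b + c * a) * w = (b * w) * (d + c * x) by rewrite aE; ring.
apply: idprod_mul.
  by split; [rewrite mulrC; apply: Jw | rewrite mulrAC mulrC -aE; apply: Jw].
by apply: (subringD sB); [apply: AB | apply: (subringM sB) => //; apply: AB].
Qed.

Lemma torsion_overring_localization B : torsion_class_group A -> overring A B ->
  is_localization A B.
Proof.
move=> torA oB; have [sB AB] := oB.
exists (fun s => [/\ A s, s != 0 & B s^-1]); split.
- by move=> s [].
- by rewrite invr1; split; [apply: subring1 | apply: oner_neq0 | apply: (subring1 sB)].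
- move=> s t [As s0 Bs] [At t0 Bt]; split; [exact: subringM | by rewrite mulf_neq0 | ].
  by rewrite invfM; apply: (subringM sB).
move=> x; split; last first.
  by move=> [a [s [Aa [_ _ Bs] ->]]]; apply: (subringM sB) => //; apply: AB.
move=> Bx; pose I := denominators A x.
have iI := ideal_denominators sA x.
have [b [Ib b0]] : nonzero I.
  have [a [b [Aa Ab b0 xE]]] : exists a b, [/\ A a, A b, b != 0 & x = a / b].
    by case: dA => _ fA _ _ _; apply: fA.
  by exists b; split=> //; split=> //; rewrite xE mulrC divfK.
have [n [n0 /principalP [y yE]]] : exists n, (0 < n)%N /\ principal A (idpow A I n).
  apply: torA; split; [by case: iI | by exists b | ].
  by exists 1; split; [apply: subring1 | apply: oner_neq0 | move=> c [Ac _]; rewrite mul1r].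
have [Ay Ayx] : I y by apply: (idpow_sub sA iI n0); rewrite -/I yE; apply: (prin_self sA).
have By' : B y^-1.
  apply: (overring_prin_inv oB); rewrite -yE; apply: (idpow_generate sA n oB).
  exact: denominators_generate.
have y0 : y != 0.
  apply/eqP => y0; have := idpow_exp sA n Ib; rewrite -/I yE y0 => -[c [_]].
  by rewrite mulr0 => /eqP; rewrite expf_eq0 (negbTE b0) andbF.
exists (y * x), y; split=> //; by rewrite mulrC mulKf.
Qed.

End Localization.

Section Torsion.
Variables (K : fieldType) (A : K -> Prop).
Hypothesis sA : subring A.
Implicit Types I J : K -> Prop.

Definition torsion I := exists n, (0 < n)%N /\ principal A (idpow A I n).

Lemma torsionP I : torsion I <-> exists n y, (0 < n)%N /\ idpow A I n = prin A y.
Proof.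
split=> [[n [n0 /principalP [y yE]]] | [n [y [n0 yE]]]]; first by exists n, y.
by exists n; split=> //; apply/principalP; exists y.
Qed.

Lemma torsion_ring : torsion A.
Proof.
apply/torsionP; exists 1%N, 1; split=> //.
by rewrite idpow1 ?prin1 //; apply: submod_ring.
Qed.

Lemma torsion_idprod I J : submod A I -> submod A J -> torsion I -> torsion J ->
  torsion (idprod I J).
Proof.
move=> sI sJ /torsionP [m [x [m0 xE]]] /torsionP [n [y [n0 yE]]].
apply/torsionP; exists (m * n)%N, (x ^+ n * y ^+ m); split; first by rewrite muln_gt0 m0.
rewrite idpow_idprod // idpowM // (mulnC m) idpowM // xE yE !idpow_prin //.
by rewrite idprod_prin.
Qed.

Lemma torsion_prin_idprod c I : c != 0 -> submod A I ->
  torsion (idprod (prin A c) I) -> torsion I.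
Proof.
move=> c0 sI /torsionP [n [y [n0 yE]]]; apply/torsionP; exists n, (c ^- n * y); split=> //.
move: yE; rewrite idpow_idprod //; last exact: submod_prin.
rewrite idpow_prin // => yE.
rewrite -[idpow A I n](@prin_idprodK _ _ sA (c ^+ n)); [|exact: expf_neq0|exact: submod_idpow].
by rewrite yE idprod_prin.
Qed.

End Torsion.

Section NonTorsion.
Variables (K : fieldType) (A : K -> Prop).
Hypothesis dA : dedekind A.
Implicit Types I J L P : K -> Prop.

Let sA : subring A. Proof. by case: dA. Qed.
Let nA : noetherian A. Proof. by case: dA. Qed.

(* If P < J < A then P = J (P J^-1); J is torsion by maximality of P, so
   P J^-1 cannot be torsion, hence equals P, which forces J^-1 = A and J = A. *)
Lemma maximal_nontorsion_maximal P : ideal A P -> nonzero P -> ~ torsion A P ->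
  (forall J, ideal A J -> nonzero J -> ~ torsion A J -> P `<=` J -> J `<=` P) ->
  maximal_ideal A P.
Proof.
move=> iP nzP tP maxP; have sP := proj1 iP.
have P1 : ~ P 1.
  move=> P1; apply: tP; suff -> : P = A by apply: torsion_ring.
  by apply: pred_ext; [case: iP | apply: ideal1_sub].
split=> // J iJ PJ; case: (classic (J 1)) => J1; [by left | right].
suff JP : J `<=` P by move=> x; split; [apply: JP | apply: PJ].
apply: NNPP => JP.
have nzJ : nonzero J := nonzero_sub nzP PJ.
have tJ : torsion A J by apply: NNPP => tJ; apply: JP; apply: maxP.
have JJ' := idprod_idinv dA iJ nzJ.
pose L := idprod P (idinv A J).
have iL : ideal A L by split; [apply: submod_idprodl | apply: (idprod_idinv_sub sA)].
have PL : P `<=` L.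
  move=> x Px; rewrite -(mulr1 x); apply: idprod_mul => //.
  by apply: (ring_sub_idinv sA iJ); apply: (subring1 sA).
have PE : idprod J L = P by rewrite /L idprodCA JJ' (idprod1r sA).
case: (classic (L `<=` P)) => LP.
  have LE : L = P by apply: pred_ext.
  have J'E : idinv A J = A.
    have := congr1 (idprod (idinv A P)) LE.
    rewrite /L idprodA (idprodC (idinv A P)) idprod_idinv // (idprod1l sA) //.
    exact: (submod_idinv sA).
  by apply: J1; move: JJ'; rewrite J'E (idprod1r sA (proj1 iJ)) => ->; apply: (subring1 sA).
apply: tP; rewrite -PE; apply: (torsion_idprod sA (proj1 iJ) (proj1 iL) tJ).
by apply: NNPP => tL; apply: LP; apply: maxP => //; apply: nonzero_sub nzP PL.
Qed.

Lemma exists_maximal_nontorsion : ~ torsion_class_group A ->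
  exists P, [/\ maximal_ideal A P, nonzero P & ~ torsion A P].
Proof.
move=> ntA.
have [I [[sI [x0 [Ix0 x00]] [d [Ad d0 dI]]] tI]] : exists I, frac_ideal A I /\ ~ torsion A I.
  by apply: NNPP => noI; apply: ntA => I fI; apply: NNPP => tI; apply: noI; exists I.
pose dI' := idprod (prin A d) I.
have idI : ideal A dI'.
  split; first by apply: submod_idprodr.
  apply: idprod_ind; [exact: subring0 | exact: subringD | ].
  by move=> _ i [e [Ae ->]] Ii; rewrite -mulrA; apply: subringM => //; apply: dI.
have nzdI : nonzero dI'.
  by exists (d * x0); split; [apply: idprod_mul => //; apply: prin_self | rewrite mulf_neq0].
have tdI : ~ torsion A dI' by move/(torsion_prin_idprod sA d0 sI).
have [P [iP [nzP tP] maxP]] := noetherian_maximal sA nA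
  (T := fun J => nonzero J /\ ~ torsion A J) (ex_intro _ dI' (conj idI (conj nzdI tdI))).
exists P; split=> //; apply: maximal_nontorsion_maximal => // J iJ nzJ tJ.
exact: maxP.
Qed.

Section MaximalIdeal.
Variable P : K -> Prop.
Hypotheses (mP : maximal_ideal A P) (nzP : nonzero P).

Let iP : ideal A P. Proof. by case: mP. Qed.
Let sP : submod A P. Proof. by case: iP. Qed.
Let sPn n : submod A (idpow A P n). Proof. exact: submod_idpow. Qed.

Lemma idprod_pow_inj n I J : submod A I -> submod A J ->
  idprod I (idpow A P n) = idprod J (idpow A P n) -> I = J.
Proof.
have PP' := idprod_idinv dA iP nzP.
elim: n I J => [|n IHn] I J sI sJ /=; first by rewrite !(idprod1r sA).
rewrite !idprodA => IJE; apply: IHn => //; try exact: submod_idprodl.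
have := congr1 (fun X => idprod X (idinv A P)) IJE.
by rewrite -!idprodA PP' (idprod1r sA).
Qed.

(* P + xA = A gives 1 = p + a x, and then 1 lies in J + P^k for every k. *)
Lemma maximal_pow_coprime N J x : ideal A J -> idpow A P N `<=` J -> J x -> ~ P x -> J 1.
Proof.
move=> iJ PNJ Jx Px; have [[J0 JD JM] JA] := iJ.
have [[p [a [Pp Aa pE]]] | adjP] := (let: And3 _ _ maxP := mP in maxP)
  _ (ideal_adj_ideal sA iP (JA x Jx)) (@ideal_adj_subl _ _ sA P x); last first.
  by case: Px; apply/adjP; apply: (ideal_adj_r sA); case: iP => [[]].
have Apax : A (p + a * x).
  by apply: (subringD sA); [case: iP => _; apply | apply: (subringM sA) => //; apply: JA].
have split1 k : exists j q, [/\ J j, idpow A P k q & 1 = j + q].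
  elim: k => [|k [j [q [Jj Pq jqE]]]].
    by exists 0, 1; rewrite add0r; split=> //; apply: (subring1 sA).
  have Aq : A q by case: (ideal_idpow sA k iP) => _; apply.
  exists (j * (p + a * x) + q * a * x), (q * p); split.
  - by apply: (JD); [rewrite mulrC | ]; apply: (JM) => //; apply: (subringM sA).
  - by rewrite idpowS; apply: idprod_mul.
  - by rewrite -[LHS]mulr1 [X in _ * X]pE jqE; ring.
have [j [q [Jj Pq ->]]] := split1 N.
by apply: (JD) => //; apply: PNJ.
Qed.

(* Unless J = A, J is contained in P, and P^-1 J is an ideal containing P^(N-1). *)
Lemma ideal_above_pow N J : ideal A J -> idpow A P N `<=` J -> exists j, J = idpow A P j.
Proof.
elim: N J => [|N IHN] J iJ PNJ.
  by exists 0%N; apply: pred_ext => //; case: iJ.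
case: (classic (J 1)) => J1.
  by exists 0%N; apply: pred_ext; [case: iJ | apply: ideal1_sub].
have JP : J `<=` P.
  by move=> x Jx; apply: NNPP => Px; apply: J1; apply: (maximal_pow_coprime iJ PNJ Jx Px).
have PP' := idprod_idinv dA iP nzP.
pose L := idprod (idinv A P) J.
have iL : ideal A L.
  split; first by apply: submod_idprodr; case: iJ.
  by rewrite /L idprodC; apply: (idprod_idinv_sub sA).
have PNL : idpow A P N `<=` L.
  move=> x PNx; have : idprod (idinv A P) (idprod P (idpow A P N)) x.
    by rewrite idprodA (idprodC _ P) PP' (idprod1l sA).
  by apply: idprodS => // y; rewrite idprodC; apply: PNJ.
have [j LE] := IHN L iL PNL.
exists j.+1; rewrite idpowS idprodC -LE /L idprodA PP' (idprod1l sA) //; by case: iJ.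
Qed.

Lemma idinv_pow_mul y n k : idinv A P y -> (k <= n)%N ->
  idpow A P n `<=` (fun z => A (y ^+ k * z)).
Proof.
move=> Py; elim: n k => [|n IHn] k.
  by rewrite leqn0 => /eqP -> z Az; rewrite expr0 mul1r.
move=> kn; apply: idprod_ind.
- by rewrite mulr0; apply: (subring0 sA).
- by move=> u v Au Av; rewrite mulrDr; apply: (subringD sA).
move=> w p Pw Pp; case: k kn => [|k] kn.
  rewrite expr0 mul1r; apply: (subringM sA); last by case: iP => _; apply.
  by case: (ideal_idpow sA n iP) => _; apply.
by rewrite exprSr mulrACA; apply: (subringM sA); [apply: IHn | apply: Py].
Qed.

Lemma horner_idinv_pow y f : idinv A P y -> poly_over A f ->
  idpow A P (size f) `<=` (fun z => A (f.[y] * z)).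
Proof.
move=> Py Af z Pz; rewrite horner_coef mulr_suml; apply: (subring_sum sA) => i.
rewrite -mulrA; apply: (subringM sA) => //.
exact: (idinv_pow_mul Py (ltnW (ltn_ord i))).
Qed.

Hypothesis ntP : ~ torsion A P.

(* u P^n is an ideal containing P^(m+n), hence a power P^j; cancelling P^n
   shows that uA or u^-1 A is a power of P, which must be trivial. *)
Lemma unit_of_pow_bounded u m n : u != 0 ->
  idpow A P n `<=` (fun z => A (u * z)) -> idpow A P m `<=` (fun z => A (u^-1 * z)) ->
  A u /\ A u^-1.
Proof.
move=> u0 uPn u'Pm.
have spu := submod_prin sA u.
pose J := idprod (prin A u) (idpow A P n).
have iJ : ideal A J.
  split; first by apply: submod_idprodl.
  apply: idprod_ind; [exact: (subring0 sA) | exact: (subringD sA) | ].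
  by move=> _ z [a [Aa ->]] Pz; rewrite -mulrA; apply: (subringM sA) => //; apply: uPn.
have PJ : idpow A P (m + n) `<=` J.
  rewrite (idpowD sA) //; have [J0 JD _] := proj1 iJ.
  apply: idprod_ind => // w z Pw Pz; apply: idprod_mul => //.
  by exists (u^-1 * w); split; [apply: u'Pm | rewrite mulrAC mulVf // mul1r].
have [j JE] := ideal_above_pow iJ PJ.
case: (leqP n j) => [nj | jn].
  have uE : prin A u = idpow A P (j - n).
    by apply: (@idprod_pow_inj n) => //; rewrite -(idpowD sA) // subnK.
  case: (posnP (j - n)) => [jn0 | jn_gt0]; last first.
    by case: ntP; apply/torsionP; exists (j - n)%N, u.
  have uA : prin A u = A by rewrite uE jn0.
  split; first by rewrite -uA; apply: (prin_self sA).
  have [c [Ac c1]] : prin A u 1 by rewrite uA; apply: (subring1 sA).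
  by rewrite -[u^-1]mul1r c1 mulfK.
have uE : idprod (prin A u) (idpow A P (n - j)) = A.
  apply: (@idprod_pow_inj j); [exact: submod_idprodr | exact: submod_ring | ].
  by rewrite -idprodA -(idpowD sA) // subnK ?(ltnW jn) // -/J JE (idprod1l sA).
case: ntP; apply/torsionP; exists (n - j)%N, u^-1; rewrite subn_gt0; split=> //.
by rewrite -(prin_idprodK sA u0 (sPn (n - j))) uE (idprod1r sA) //; apply: submod_prin.
Qed.

End MaximalIdeal.

Lemma nontorsion_monogenic_overring : ~ torsion_class_group A ->
  exists B : K -> Prop,
    [/\ overring A B, (exists x, B x /\ ~ A x), (exists b, gen_by A B b)
      & forall u, unit_in B u <-> unit_in A u].
Proof.
move=> ntA; have [P [mP nzP ntP]] := exists_maximal_nontorsion ntA.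
have [y [Py Ay]] := maximal_idinv_outside dA mP nzP.
pose B x := exists p, poly_over A p /\ x = p.[y].
have AB : A `<=` B by move=> x Ax; exists x%:P; split; [apply: poly_overC | rewrite hornerC].
have sB : subring B.
  split.
  - by exists 0; split; [apply: poly_over0 | rewrite horner0].
  - by exists 1; split; [apply: poly_over1 | rewrite hornerC].
  - move=> _ _ [p [Ap ->]] [q [Aq ->]].
    by exists (p - q); split; [apply: poly_overB | rewrite hornerD hornerN].
  - move=> _ _ [p [Ap ->]] [q [Aq ->]].
    by exists (p * q); split; [apply: poly_overM | rewrite hornerM].
exists B; split=> //.
- by exists y; split=> //; exists 'X; split; [apply: poly_overX | rewrite hornerX].
- by exists y.
move=> u; split; last by move=> [Au u0 Au']; split=> //; apply: AB.
move=> [[p [Ap uE]] u0 [q [Aq u'E]]].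
have uPn : idpow A P (size p) `<=` (fun z => A (u * z)).
  by rewrite uE; apply: horner_idinv_pow.
have u'Pm : idpow A P (size q) `<=` (fun z => A (u^-1 * z)).
  by rewrite u'E; apply: horner_idinv_pow.
by have [Au Au'] := unit_of_pow_bounded mP nzP ntP u0 uPn u'Pm.
Qed.

End NonTorsion.

Unset Implicit Arguments.

Theorem proposition3p13 (K : fieldType) (A : K -> Prop) :
  dedekind A ->
  [/\ (torsion_class_group A <-> forall B, overring A B -> is_localization A B),
      (torsion_class_group A <-> forall B, overring A B -> well_centered A B)
    & (torsion_class_group A <->
        ~ exists B : K -> Prop,
            [/\ overring A B, (exists x, B x /\ ~ A x),
                (exists b, gen_by A B b)
              & forall u, unit_in B u <-> unit_in A u])].
Proof.
move=> dA; have sA : subring A by case: dA.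
pose no_monogenic := ~ exists B : K -> Prop, [/\ overring A B, (exists x, B x /\ ~ A x),
  (exists b, gen_by A B b) & forall u, unit_in B u <-> unit_in A u].
have tor_loc : torsion_class_group A -> forall B, overring A B -> is_localization A B.
  by move=> torA B; apply: torsion_overring_localization.
have loc_wc : (forall B, overring A B -> is_localization A B) ->
    forall B, overring A B -> well_centered A B.
  by move=> locA B oB; apply: localization_well_centered sA B (locA B oB).
have wc_nomono : (forall B, overring A B -> well_centered A B) -> no_monogenic.
  move=> wcA [B [oB [x [Bx Ax]] [b genB] UBA]].
  by apply: Ax; apply: (monogenic_well_centered_sub sA oB genB UBA (wcA B oB)).
have nomono_tor : no_monogenic -> torsion_class_group A.
  by move=> noA; apply: NNPP => /(nontorsion_monogenic_overring dA).
split; split.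
- exact: tor_loc.
- by move=> /loc_wc /wc_nomono /nomono_tor.
- by move=> /tor_loc /loc_wc.
- by move=> /wc_nomono /nomono_tor.
- by move=> /tor_loc /loc_wc /wc_nomono.
- exact: nomono_tor.
Qed.
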